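(* Let $\rho(t)$ solve the Lindblad equation $\frac{d}{dt}\rho=[-iH(t),\rho]+\mathcal{L}_D(\rho)$ and suppose $\rho(t)=\sum_{j=1}^n\lambda_j(t)\pi_j(t)$ where $\Lambda(t)=(\lambda_1(t),\dots,\lambda_n(t))$ is differentiable and $\pi(t)=(\pi_1(t),\dots,\pi_n(t))$ is a differentiable complete flag. Then $$\frac{d}{dt}\Lambda(t)=\Omega^{\pi(t)}\Lambda(t).$$ This holds also at sharp eigenvalue crossings.
   Context: Dissipator: $\mathcal{L}_D(\rho)=\sum_{k=1}^N\big(L_k\rho L_k^\dagger-\tfrac12\{L_k^\dagger L_k,\rho\}\big)$ for fixed $n\times n$ complex matrices $L_1,\dots,L_N$, $H(t)$ Hermitian. A complete flag $\pi=(\pi_1,\dots,\pi_n)$ is an $n$-tuple of rank-one orthogonal projectors on $\mathbb{C}^n$ with $\pi_i\pi_j=\delta_{ij}\pi_i$ and $\sum_j\pi_j=I$. For a complete flag define $w^\pi_{ij}=\sum_{k=1}^N\mathrm{Tr}(\pi_iL_k\pi_jL_k^\dagger)$ and the $n\times n$ matrix $\Omega^\pi$ by $\Omega^\pi_{ij}=w^\pi_{ij}$ for $i\neq j$ and $\Omega^\pi_{jj}=-\sum_{l\neq j}w^\pi_{lj}$. A sharp eigenvalue crossing is an isolated time where some $\lambda_j$ coincide and all crossing eigenvalues have pairwise different derivatives. *)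

(* classical reals, derivatives from Stdlib Reals.
   Complex numbers are encoded as pairs (Re, Im) of reals; n x n complex
   matrices as functions nat -> nat -> C, only indices < n being relevant. *)
From Stdlib Require Import Reals.
Open Scope R_scope.

Definition C : Type := (R * R)%type.
Definition Re (z : C) : R := fst z.
Definition Im (z : C) : R := snd z.
Definition C0 : C := (0, 0).
Definition C1 : C := (1, 0).
Definition Ci : C := (0, 1).
Definition RtoC (r : R) : C := (r, 0).
Definition Cplus (a b : C) : C := (Re a + Re b, Im a + Im b).
Definition Copp (a : C) : C := (- Re a, - Im a).
Definition Cminus (a b : C) : C := Cplus a (Copp b).
Definition Cmult (a b : C) : C :=
  (Re a * Re b - Im a * Im b, Re a * Im b + Im a * Re b).
Definition Cconj (a : C) : C := (Re a, - Im a).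

Fixpoint csum (n : nat) (f : nat -> C) : C :=
  match n with
  | O => C0
  | S m => Cplus (csum m f) (f m)
  end.

Definition Mat : Type := nat -> nat -> C.
Definition mzero : Mat := fun _ _ => C0.
Definition idm : Mat := fun i j => if Nat.eqb i j then C1 else C0.
Definition madd (A B : Mat) : Mat := fun i j => Cplus (A i j) (B i j).
Definition msub (A B : Mat) : Mat := fun i j => Cminus (A i j) (B i j).
Definition mscale (c : C) (A : Mat) : Mat := fun i j => Cmult c (A i j).
Definition mmul (n : nat) (A B : Mat) : Mat :=
  fun i j => csum n (fun k => Cmult (A i k) (B k j)).
Definition adj (A : Mat) : Mat := fun i j => Cconj (A j i).
Definition trace (n : nat) (A : Mat) : C := csum n (fun i => A i i).
Definition msum (m : nat) (F : nat -> Mat) : Mat :=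
  fun a b => csum m (fun k => F k a b).

Definition meq (n : nat) (A B : Mat) : Prop :=
  forall i j, (i < n)%nat -> (j < n)%nat -> A i j = B i j.

Definition hermitian (n : nat) (A : Mat) : Prop := meq n (adj A) A.

Definition rank_one (n : nat) (P : Mat) : Prop :=
  exists u w : nat -> C,
    (exists i, (i < n)%nat /\ u i <> C0) /\
    (exists i, (i < n)%nat /\ w i <> C0) /\
    meq n P (fun i j => Cmult (u i) (Cconj (w j))).

Definition complete_flag (n : nat) (pi : nat -> Mat) : Prop :=
  (forall j, (j < n)%nat -> rank_one n (pi j) /\ hermitian n (pi j)) /\
  (forall i j, (i < n)%nat -> (j < n)%nat ->
     meq n (mmul n (pi i) (pi j)) (if Nat.eqb i j then pi i else mzero)) /\
  meq n (msum n pi) idm.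

Definition dissipator (n N : nat) (Ls : nat -> Mat) (rho : Mat) : Mat :=
  msum N (fun k =>
    msub (mmul n (mmul n (Ls k) rho) (adj (Ls k)))
         (mscale (RtoC (/ 2))
            (madd (mmul n (mmul n (adj (Ls k)) (Ls k)) rho)
                  (mmul n rho (mmul n (adj (Ls k)) (Ls k)))))).

Definition lindblad_rhs (n : nat) (H : Mat) (N : nat) (Ls : nat -> Mat)
  (rho : Mat) : Mat :=
  madd (msub (mmul n (mscale (Copp Ci) H) rho) (mmul n rho (mscale (Copp Ci) H)))
       (dissipator n N Ls rho).

Definition wpi (n N : nat) (Ls : nat -> Mat) (pi : nat -> Mat) (i j : nat) : C :=
  csum N (fun k => trace n (mmul n (mmul n (mmul n (pi i) (Ls k)) (pi j)) (adj (Ls k)))).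

Definition Omega (n N : nat) (Ls : nat -> Mat) (pi : nat -> Mat) (i j : nat) : C :=
  if Nat.eqb i j
  then Copp (csum n (fun l => if Nat.eqb l j then C0 else wpi n N Ls pi l j))
  else wpi n N Ls pi i j.

Definition mat_has_deriv (n : nat) (f : R -> Mat) (t : R) (D : Mat) : Prop :=
  forall i j, (i < n)%nat -> (j < n)%nat ->
    derivable_pt_lim (fun s => Re (f s i j)) t (Re (D i j)) /\
    derivable_pt_lim (fun s => Im (f s i j)) t (Im (D i j)).

Definition mat_derivable (n : nat) (f : R -> Mat) (t : R) : Prop :=
  exists D, mat_has_deriv n f t D.

(* The eigenvalues are read off as lambda_j = Tr(pi_j rho).  Differentiating,
   lambda_j' = Tr(pi_j' rho) + Tr(pi_j rho').  The first term vanishes: from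
   pi_j^2 = pi_j we get pi_j' = pi_j' pi_j + pi_j pi_j', hence Tr(pi_j' pi_j) = 0,
   and rho acts as lambda_j on both sides of pi_j.  In the second term the
   commutator with H drops out for the same reason, and expanding rho in the
   flag turns the dissipator into the rates w^pi, giving (Omega^pi Lambda)_j.
   Nothing requires the eigenvalues to be distinct, so crossings are covered. *)

From Pilot Require Import Defs.
From Stdlib Require Import Reals.
Open Scope R_scope.
From Stdlib Require Import Lra Lia Setoid Morphisms Ring FunctionalExtensionality.
(* Reals exports its own [C1] (class of C^1 functions); restore the complex one. *)
Import Defs.

(** * Complex arithmetic and finite sums *)

Lemma C_ring_theory : ring_theory C0 C1 Cplus Cmult Cminus Copp (@eq C).
Proof.
  constructor; intros; repeat match goal with x : C |- _ => destruct x end;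
  unfold Cminus, Cplus, Cmult, Copp, C0, C1, Re, Im; simpl; f_equal; ring.
Qed.
Add Ring C_ring : C_ring_theory.

Lemma C_eq_of_parts (a b : C) : Re a = Re b -> Im a = Im b -> a = b.
Proof. destruct a, b; unfold Re, Im; simpl; intros -> ->; reflexivity. Qed.

Lemma Cmult_integral (x y : C) : Cmult x y = C0 -> x = C0 \/ y = C0.
Proof.
  destruct x as [a b], y as [c d]; unfold Cmult, C0, Re, Im; simpl.
  intros E; injection E as E1 E2.
  destruct (Req_dec (a * a + b * b) 0) as [Hab | Hab].
  - left; assert (a = 0 /\ b = 0) as [-> ->] by nra; reflexivity.
  - right.
    assert (Hc : (a * a + b * b) * c = a * (a * c - b * d) + b * (a * d + b * c)) by ring.
    assert (Hd : (a * a + b * b) * d = a * (a * d + b * c) - b * (a * c - b * d)) by ring.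
    rewrite E1, E2, Rmult_0_r, Rmult_0_r, Rplus_0_r in Hc.
    rewrite E1, E2, Rmult_0_r, Rmult_0_r, Rminus_0_r in Hd.
    apply Rmult_integral in Hc as [Hc | ->]; [contradiction|].
    apply Rmult_integral in Hd as [Hd | ->]; [contradiction|reflexivity].
Qed.

Lemma Cconj_neq0 (x : C) : x <> C0 -> Cconj x <> C0.
Proof.
  destruct x as [a b]; unfold Cconj, C0, Re, Im; simpl.
  intros Hx E; apply Hx; injection E as -> E; f_equal; lra.
Qed.

Lemma Cmult_eq_l_1 (x s : C) : x <> C0 -> Cmult x s = x -> s = C1.
Proof.
  intros Hx E.
  assert (Hs : Cmult x (Cminus s C1) = C0).
  { transitivity (Cminus (Cmult x s) x); [ring|]. rewrite E. ring. }
  apply Cmult_integral in Hs as [Hs | Hs]; [contradiction|].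
  transitivity (Cplus (Cminus s C1) C1); [ring|]. rewrite Hs; ring.
Qed.

Lemma csum_ext n (f g : nat -> C) :
  (forall k, (k < n)%nat -> f k = g k) -> csum n f = csum n g.
Proof. induction n; simpl; intros E; auto. rewrite IHn, E; auto. Qed.

Lemma csum_0 n : csum n (fun _ => C0) = C0.
Proof. induction n; simpl; auto. rewrite IHn; ring. Qed.

Lemma csum_add n (f g : nat -> C) :
  csum n (fun k => Cplus (f k) (g k)) = Cplus (csum n f) (csum n g).
Proof. induction n; simpl; [ring|]. rewrite IHn; ring. Qed.

Lemma csum_opp n (f : nat -> C) : Copp (csum n f) = csum n (fun k => Copp (f k)).
Proof. induction n; simpl; [ring|]. rewrite <- IHn; ring. Qed.

Lemma csum_sub n (f g : nat -> C) :
  csum n (fun k => Cminus (f k) (g k)) = Cminus (csum n f) (csum n g).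
Proof. unfold Cminus. rewrite csum_add, csum_opp. reflexivity. Qed.

Lemma csum_mul_l n c (f : nat -> C) : Cmult c (csum n f) = csum n (fun k => Cmult c (f k)).
Proof. induction n; simpl; [ring|]. rewrite <- IHn; ring. Qed.

Lemma csum_mul_r n c (f : nat -> C) : Cmult (csum n f) c = csum n (fun k => Cmult (f k) c).
Proof. induction n; simpl; [ring|]. rewrite <- IHn; ring. Qed.

Lemma csum_swap n m (F : nat -> nat -> C) :
  csum n (fun i => csum m (fun k => F i k)) = csum m (fun k => csum n (fun i => F i k)).
Proof. induction n; simpl. - now rewrite csum_0. - now rewrite IHn, <- csum_add. Qed.

Lemma csum_if_eqb n j (a b : nat -> C) : (j < n)%nat ->
  csum n (fun m => if Nat.eqb j m then a m else b m) = Cplus (csum n b) (Cminus (a j) (b j)).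
Proof.
  induction n; intros Hj; [lia|]. simpl.
  destruct (Nat.eqb_spec j n) as [-> | Hjn].
  - rewrite (csum_ext n _ b); [ring|].
    intros k Hk; destruct (Nat.eqb_spec n k); [lia|reflexivity].
  - rewrite IHn by lia; ring.
Qed.

Lemma csum_delta n j (a : nat -> C) : (j < n)%nat ->
  csum n (fun m => if Nat.eqb j m then a m else C0) = a j.
Proof. intros Hj. rewrite csum_if_eqb, csum_0 by exact Hj. ring. Qed.

(** * Matrices up to equality of their n x n block *)

Global Instance meq_equiv n : Equivalence (meq n).
Proof.
  constructor; unfold meq.
  - intros A i j; auto.
  - intros A B E i j Hi Hj; symmetry; auto.
  - intros A B D E1 E2 i j Hi Hj; rewrite E1; auto.
Qed.

Global Instance mmul_proper n : Proper (meq n ==> meq n ==> meq n) (mmul n).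
Proof.
  intros A A' EA B B' EB i j Hi Hj. apply csum_ext; intros k Hk. rewrite EA, EB; auto.
Qed.

Global Instance madd_proper n : Proper (meq n ==> meq n ==> meq n) madd.
Proof. intros A A' EA B B' EB i j Hi Hj. unfold madd. rewrite EA, EB; auto. Qed.

Global Instance msub_proper n : Proper (meq n ==> meq n ==> meq n) msub.
Proof. intros A A' EA B B' EB i j Hi Hj. unfold msub. rewrite EA, EB; auto. Qed.

Global Instance mscale_proper n c : Proper (meq n ==> meq n) (mscale c).
Proof. intros A A' EA i j Hi Hj. unfold mscale. rewrite EA; auto. Qed.

Global Instance trace_proper n : Proper (meq n ==> eq) (trace n).
Proof. intros A A' EA. apply csum_ext; intros; apply EA; auto. Qed.

Lemma msum_ext n m (F G : nat -> Mat) :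
  (forall k, (k < m)%nat -> meq n (F k) (G k)) -> meq n (msum m F) (msum m G).
Proof. intros E i j Hi Hj. apply csum_ext; intros; apply E; auto. Qed.

Lemma mmul_assoc n A B D : meq n (mmul n (mmul n A B) D) (mmul n A (mmul n B D)).
Proof.
  intros i j _ _. unfold mmul.
  transitivity (csum n (fun k => csum n (fun l => Cmult (A i l) (Cmult (B l k) (D k j))))).
  - apply csum_ext; intros. rewrite csum_mul_r. apply csum_ext; intros. ring.
  - rewrite csum_swap. apply csum_ext; intros. now rewrite csum_mul_l.
Qed.

Lemma mmul_maddl n A B D : meq n (mmul n (madd A B) D) (madd (mmul n A D) (mmul n B D)).
Proof. intros i j _ _. unfold mmul, madd. rewrite <- csum_add. apply csum_ext; intros; ring. Qed.

Lemma mmul_maddr n A B D : meq n (mmul n D (madd A B)) (madd (mmul n D A) (mmul n D B)).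
Proof. intros i j _ _. unfold mmul, madd. rewrite <- csum_add. apply csum_ext; intros; ring. Qed.

Lemma mmul_msubr n A B D : meq n (mmul n D (msub A B)) (msub (mmul n D A) (mmul n D B)).
Proof. intros i j _ _. unfold mmul, msub. rewrite <- csum_sub. apply csum_ext; intros; ring. Qed.

Lemma mmul_mscalel n c A B : meq n (mmul n (mscale c A) B) (mscale c (mmul n A B)).
Proof. intros i j _ _. unfold mmul, mscale. rewrite csum_mul_l. apply csum_ext; intros; ring. Qed.

Lemma mmul_mscaler n c A B : meq n (mmul n A (mscale c B)) (mscale c (mmul n A B)).
Proof. intros i j _ _. unfold mmul, mscale. rewrite csum_mul_l. apply csum_ext; intros; ring. Qed.

Lemma mmul_msuml n m F B : meq n (mmul n (msum m F) B) (msum m (fun k => mmul n (F k) B)).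
Proof.
  intros i j _ _. unfold mmul, msum. rewrite csum_swap.
  apply csum_ext; intros. now rewrite csum_mul_r.
Qed.

Lemma mmul_msumr n m F B : meq n (mmul n B (msum m F)) (msum m (fun k => mmul n B (F k))).
Proof.
  intros i j _ _. unfold mmul, msum. rewrite csum_swap.
  apply csum_ext; intros. now rewrite csum_mul_l.
Qed.

Lemma mmul1l n A : meq n (mmul n idm A) A.
Proof.
  intros i j Hi _. unfold mmul, idm. rewrite <- (csum_delta n i (fun k => A k j)) by exact Hi.
  apply csum_ext; intros. destruct (Nat.eqb i k); ring.
Qed.

Lemma trace_madd n A B : trace n (madd A B) = Cplus (trace n A) (trace n B).
Proof. apply csum_add. Qed.

Lemma trace_msub n A B : trace n (msub A B) = Cminus (trace n A) (trace n B).
Proof. apply csum_sub. Qed.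

Lemma trace_mscale n c A : trace n (mscale c A) = Cmult c (trace n A).
Proof. unfold trace, mscale. now rewrite csum_mul_l. Qed.

Lemma trace_msum n m F : trace n (msum m F) = csum m (fun k => trace n (F k)).
Proof. apply csum_swap. Qed.

Lemma trace_mmulC n A B : trace n (mmul n A B) = trace n (mmul n B A).
Proof.
  unfold trace, mmul. rewrite csum_swap.
  apply csum_ext; intros; apply csum_ext; intros; ring.
Qed.

Lemma trace_mul_comm3 n A B D : trace n (mmul n A (mmul n B D)) = trace n (mmul n D (mmul n A B)).
Proof. now rewrite <- mmul_assoc, trace_mmulC. Qed.

(** * Derivatives of complex- and matrix-valued functions *)

Definition C_has_deriv (f : R -> C) (t : R) (d : C) : Prop :=
  derivable_pt_lim (fun s => Re (f s)) t (Re d) /\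
  derivable_pt_lim (fun s => Im (f s)) t (Im d).

Lemma C_has_deriv_const c t : C_has_deriv (fun _ => c) t C0.
Proof. split; apply derivable_pt_lim_const. Qed.

Lemma C_has_deriv_add f g t a b : C_has_deriv f t a -> C_has_deriv g t b ->
  C_has_deriv (fun s => Cplus (f s) (g s)) t (Cplus a b).
Proof. intros [Ha1 Ha2] [Hb1 Hb2]; split; now apply derivable_pt_lim_plus. Qed.

Lemma C_has_deriv_mul f g t a b : C_has_deriv f t a -> C_has_deriv g t b ->
  C_has_deriv (fun s => Cmult (f s) (g s)) t (Cplus (Cmult a (g t)) (Cmult (f t) b)).
Proof.
  intros [Ha1 Ha2] [Hb1 Hb2]; unfold Cplus, Cmult, Re, Im in *; split; simpl.
  - match goal with |- derivable_pt_lim _ _ ?l =>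
      replace l with ((fst a * fst (g t) + fst (f t) * fst b)
                      - (snd a * snd (g t) + snd (f t) * snd b)) by ring end.
    apply derivable_pt_lim_minus; now apply derivable_pt_lim_mult.
  - match goal with |- derivable_pt_lim _ _ ?l =>
      replace l with ((fst a * snd (g t) + fst (f t) * snd b)
                      + (snd a * fst (g t) + snd (f t) * fst b)) by ring end.
    apply derivable_pt_lim_plus; now apply derivable_pt_lim_mult.
Qed.

Lemma C_has_deriv_csum n F d t : (forall k, (k < n)%nat -> C_has_deriv (F k) t (d k)) ->
  C_has_deriv (fun s => csum n (fun k => F k s)) t (csum n d).
Proof.
  induction n; intros HF; simpl.
  - apply C_has_deriv_const.
  - apply C_has_deriv_add; auto.
Qed.

Lemma C_has_deriv_unique f t a b : C_has_deriv f t a -> C_has_deriv f t b -> a = b.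
Proof.
  intros [H1 H2] [H3 H4].
  apply C_eq_of_parts; eapply uniqueness_limite; eassumption.
Qed.

Lemma mat_has_deriv_mmul n A B t DA DB :
  mat_has_deriv n A t DA -> mat_has_deriv n B t DB ->
  mat_has_deriv n (fun s => mmul n (A s) (B s)) t (madd (mmul n DA (B t)) (mmul n (A t) DB)).
Proof.
  intros HA HB i j Hi Hj. unfold madd, mmul. rewrite <- csum_add.
  apply C_has_deriv_csum; intros k Hk. apply C_has_deriv_mul; [apply HA | apply HB]; auto.
Qed.

Lemma mat_has_deriv_ext n f g t D :
  (forall s, meq n (f s) (g s)) -> mat_has_deriv n f t D -> mat_has_deriv n g t D.
Proof.
  intros E HD i j Hi Hj. change (C_has_deriv (fun s => g s i j) t (D i j)).
  replace (fun s => g s i j) with (fun s => f s i j)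
    by (apply functional_extensionality; intros; apply E; auto).
  exact (HD i j Hi Hj).
Qed.

Lemma mat_has_deriv_unique n f t D1 D2 :
  mat_has_deriv n f t D1 -> mat_has_deriv n f t D2 -> meq n D1 D2.
Proof. intros H1 H2 i j Hi Hj. eapply C_has_deriv_unique; [apply H1 | apply H2]; auto. Qed.

Lemma C_has_deriv_trace n f t D :
  mat_has_deriv n f t D -> C_has_deriv (fun s => trace n (f s)) t (trace n D).
Proof. intros HD. apply C_has_deriv_csum; intros; apply HD; auto. Qed.

(** * Projectors *)

Lemma trace_rank_one_idempotent n P :
  rank_one n P -> meq n (mmul n P P) P -> trace n P = C1.
Proof.
  intros [u [w [[i [Hi Hu]] [[k [Hk Hw]] HP]]]] HPP.
  rewrite HP in HPP |- *.
  (* P = u w^*, so P^2 = Tr(P) P; compare the nonzero entry (i, k). *)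
  apply (Cmult_eq_l_1 (Cmult (u i) (Cconj (w k)))).
  - intros Z. apply Cmult_integral in Z as [Z | Z]; [contradiction | exact (Cconj_neq0 _ Hw Z)].
  - etransitivity; [|exact (HPP i k Hi Hk)]. unfold trace, mmul. rewrite csum_mul_l.
    apply csum_ext; intros; ring.
Qed.

Lemma deriv_idempotent_split n P t D :
  mat_has_deriv n P t D -> (forall s, meq n (mmul n (P s) (P s)) (P s)) ->
  meq n D (madd (mmul n D (P t)) (mmul n (P t) D)).
Proof.
  intros HD HPP. eapply mat_has_deriv_unique; [exact HD|].
  eapply mat_has_deriv_ext; [exact HPP | exact (mat_has_deriv_mmul _ _ _ _ _ _ HD HD)].
Qed.

(* Tr(P' P) = Tr(P' P P) + Tr(P P' P) = 2 Tr(P' P). *)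
Lemma trace_deriv_idempotent_mul n P t D :
  mat_has_deriv n P t D -> (forall s, meq n (mmul n (P s) (P s)) (P s)) ->
  trace n (mmul n D (P t)) = C0.
Proof.
  intros HD HPP.
  assert (Htwice : trace n (mmul n D (P t)) =
                   Cplus (trace n (mmul n D (P t))) (trace n (mmul n D (P t)))).
  { rewrite (deriv_idempotent_split n P t D HD HPP) at 1.
    rewrite mmul_maddl, trace_madd, mmul_assoc, HPP, (mmul_assoc n (P t) D (P t)).
    now rewrite trace_mul_comm3, <- mmul_assoc, HPP, (trace_mmulC n (P t) D). }
  transitivity (Cminus (Cplus (trace n (mmul n D (P t))) (trace n (mmul n D (P t))))
                       (trace n (mmul n D (P t)))); [ring|].
  rewrite <- Htwice. ring.
Qed.

Definition orthogonal_family n (p : nat -> Mat) : Prop :=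
  forall i k, (i < n)%nat -> (k < n)%nat ->
    meq n (mmul n (p i) (p k)) (if Nat.eqb i k then p i else mzero).

Definition spectral_sum n (p : nat -> Mat) (lamv : nat -> R) : Mat :=
  msum n (fun k => mscale (RtoC (lamv k)) (p k)).

Section SpectralSum.

Variables (n : nat) (p : nat -> Mat) (lamv : nat -> R).
Hypothesis p_orth : orthogonal_family n p.

Lemma msum_scale_delta j (P : Mat) : (j < n)%nat ->
  meq n (msum n (fun k => mscale (RtoC (lamv k)) (if Nat.eqb j k then P else mzero)))
        (mscale (RtoC (lamv j)) P).
Proof.
  intros Hj a b Ha Hb. unfold msum, mscale.
  rewrite <- (csum_delta n j (fun k => Cmult (RtoC (lamv k)) (P a b))) by exact Hj.
  apply csum_ext; intros. destruct (Nat.eqb j k); unfold mzero; ring.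
Qed.

Lemma mmul_proj_spectral_sum j : (j < n)%nat ->
  meq n (mmul n (p j) (spectral_sum n p lamv)) (mscale (RtoC (lamv j)) (p j)).
Proof.
  intros Hj. unfold spectral_sum. rewrite mmul_msumr, <- msum_scale_delta by exact Hj.
  apply msum_ext; intros k Hk. now rewrite mmul_mscaler, (p_orth j k Hj Hk).
Qed.

Lemma mmul_spectral_sum_proj j : (j < n)%nat ->
  meq n (mmul n (spectral_sum n p lamv) (p j)) (mscale (RtoC (lamv j)) (p j)).
Proof.
  intros Hj. unfold spectral_sum. rewrite mmul_msuml, <- msum_scale_delta by exact Hj.
  apply msum_ext; intros k Hk. rewrite mmul_mscalel, (p_orth k j Hk Hj), Nat.eqb_sym.
  now destruct (Nat.eqb_spec j k) as [-> | ].
Qed.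

End SpectralSum.

Lemma trace_deriv_proj_mul_eigen n P t D rho c :
  mat_has_deriv n P t D -> (forall s, meq n (mmul n (P s) (P s)) (P s)) ->
  meq n (mmul n (P t) rho) (mscale c (P t)) -> meq n (mmul n rho (P t)) (mscale c (P t)) ->
  trace n (mmul n D rho) = C0.
Proof.
  intros HD HPP HPr HrP.
  pose proof (trace_deriv_idempotent_mul n P t D HD HPP) as HDP.
  rewrite (deriv_idempotent_split n P t D HD HPP), mmul_maddl, trace_madd, !mmul_assoc.
  rewrite HPr, mmul_mscaler, trace_mscale, HDP.
  rewrite trace_mmulC, mmul_assoc, HrP, mmul_mscaler, trace_mscale, HDP. ring.
Qed.

Lemma trace_proj_commutator n P rho A :
  meq n (mmul n P rho) (mmul n rho P) ->
  trace n (mmul n P (msub (mmul n A rho) (mmul n rho A))) = C0.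
Proof.
  intros Hcomm. rewrite mmul_msubr, trace_msub.
  rewrite trace_mul_comm3, <- (mmul_assoc n rho), <- Hcomm, mmul_assoc, <- trace_mul_comm3.
  ring.
Qed.

Lemma complete_flag_orthogonal n p : complete_flag n p -> orthogonal_family n p.
Proof. now intros [_ [Horth _]]. Qed.

Lemma complete_flag_idempotent n p j : complete_flag n p -> (j < n)%nat ->
  meq n (mmul n (p j) (p j)) (p j).
Proof.
  intros Hflag Hj. pose proof (complete_flag_orthogonal n p Hflag j j Hj Hj) as E.
  now rewrite Nat.eqb_refl in E.
Qed.

Lemma trace_proj_spectral_sum n p lamv j : complete_flag n p -> (j < n)%nat ->
  trace n (mmul n (p j) (spectral_sum n p lamv)) = RtoC (lamv j).
Proof.
  intros Hflag Hj.
  rewrite (mmul_proj_spectral_sum n p lamv (complete_flag_orthogonal n p Hflag) j Hj).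
  rewrite trace_mscale, trace_rank_one_idempotent; [ring | apply (proj1 Hflag j Hj) |].
  exact (complete_flag_idempotent n p j Hflag Hj).
Qed.

(** * The dissipator in the eigenbasis *)

Lemma Cmult_half_double x : Cmult (RtoC (/ 2)) (Cplus x x) = x.
Proof. destruct x; unfold Cmult, Cplus, RtoC, Re, Im; simpl; f_equal; field. Qed.

Section Dissipator.

Variables (n : nat) (p : nat -> Mat) (lamv : nat -> R).
Hypothesis p_orth : orthogonal_family n p.
Hypothesis p_sum : meq n (msum n p) idm.

Definition jump_rate (L Pa Pb : Mat) : C :=
  trace n (mmul n (mmul n (mmul n Pa L) Pb) (adj L)).

Lemma trace_proj_jump_term j L : (j < n)%nat ->
  trace n (mmul n (p j)
    (msub (mmul n (mmul n L (spectral_sum n p lamv)) (adj L))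
          (mscale (RtoC (/ 2)) (madd (mmul n (mmul n (adj L) L) (spectral_sum n p lamv))
                                     (mmul n (spectral_sum n p lamv) (mmul n (adj L) L))))))
  = Cminus (csum n (fun m => Cmult (RtoC (lamv m)) (jump_rate L (p j) (p m))))
           (Cmult (RtoC (lamv j)) (csum n (fun l => jump_rate L (p l) (p j)))).
Proof.
  intros Hj. set (rho := spectral_sum n p lamv).
  rewrite mmul_msubr, trace_msub, mmul_mscaler, trace_mscale, mmul_maddr, trace_madd.
  (* the resolution of the identity splits L^* L along the flag *)
  assert (Hloss : trace n (mmul n (p j) (mmul n (adj L) L))
                  = csum n (fun l => jump_rate L (p l) (p j))).
  { rewrite <- (mmul1l n L) at 2. rewrite <- p_sum.
    rewrite mmul_msuml, mmul_msumr, mmul_msumr, trace_msum.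
    apply csum_ext; intros l Hl. unfold jump_rate.
    rewrite (trace_mmulC n (p j)), (trace_mmulC n (mmul n (mmul n (p l) L) (p j))).
    now rewrite !mmul_assoc. }
  assert (Hleft : trace n (mmul n (p j) (mmul n (mmul n (adj L) L) rho))
                  = Cmult (RtoC (lamv j)) (trace n (mmul n (p j) (mmul n (adj L) L)))).
  { unfold rho. rewrite trace_mul_comm3, <- mmul_assoc, mmul_spectral_sum_proj by assumption.
    now rewrite mmul_mscalel, trace_mscale. }
  assert (Hright : trace n (mmul n (p j) (mmul n rho (mmul n (adj L) L)))
                   = Cmult (RtoC (lamv j)) (trace n (mmul n (p j) (mmul n (adj L) L)))).
  { unfold rho. now rewrite <- mmul_assoc, mmul_proj_spectral_sum, mmul_mscalel, trace_mscale. }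
  assert (Hgain : trace n (mmul n (p j) (mmul n (mmul n L rho) (adj L)))
                  = csum n (fun m => Cmult (RtoC (lamv m)) (jump_rate L (p j) (p m)))).
  { unfold rho, spectral_sum.
    rewrite mmul_msumr, mmul_msuml, mmul_msumr, trace_msum.
    apply csum_ext; intros m Hm. unfold jump_rate.
    rewrite mmul_mscaler, mmul_mscalel, mmul_mscaler, trace_mscale.
    now rewrite !mmul_assoc. }
  rewrite Hgain, Hleft, Hright, Hloss, Cmult_half_double. reflexivity.
Qed.

Lemma trace_proj_dissipator N Ls j : (j < n)%nat ->
  trace n (mmul n (p j) (dissipator n N Ls (spectral_sum n p lamv)))
  = Cminus (csum n (fun m => Cmult (wpi n N Ls p j m) (RtoC (lamv m))))
           (Cmult (RtoC (lamv j)) (csum n (fun l => wpi n N Ls p l j))).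
Proof.
  intros Hj. unfold dissipator. rewrite mmul_msumr, trace_msum.
  rewrite (csum_ext _ _ _ (fun k _ => trace_proj_jump_term j (Ls k) Hj)).
  rewrite csum_sub, <- (csum_mul_l N (RtoC (lamv j))), !(csum_swap N n).
  f_equal. apply csum_ext; intros m Hm.
  unfold wpi. rewrite csum_mul_r. apply csum_ext; intros; unfold jump_rate; ring.
Qed.

End Dissipator.

Lemma Omega_mul_vec n N Ls p (lamv : nat -> R) j : (j < n)%nat ->
  csum n (fun k => Cmult (Omega n N Ls p j k) (RtoC (lamv k)))
  = Cminus (csum n (fun m => Cmult (wpi n N Ls p j m) (RtoC (lamv m))))
           (Cmult (RtoC (lamv j)) (csum n (fun l => wpi n N Ls p l j))).
Proof.
  intros Hj. unfold Omega.
  set (w := wpi n N Ls p).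
  rewrite (csum_ext n _ (fun k => if Nat.eqb j k
      then Cmult (Copp (csum n (fun l => if Nat.eqb j l then C0 else w l j))) (RtoC (lamv k))
      else Cmult (w j k) (RtoC (lamv k)))).
  - rewrite !csum_if_eqb by exact Hj. ring.
  - intros k Hk. destruct (Nat.eqb_spec j k) as [<- | ]; [|reflexivity].
    do 2 f_equal. apply csum_ext; intros l Hl. now rewrite Nat.eqb_sym.
Qed.

Global Instance lindblad_rhs_proper n A N Ls : Proper (meq n ==> meq n) (lindblad_rhs n A N Ls).
Proof.
  intros B B' E. apply madd_proper; [now rewrite E|].
  apply msum_ext; intros k Hk. now rewrite E.
Qed.

Lemma trace_proj_lindblad_rhs n N Ls A p lamv j :
  orthogonal_family n p -> meq n (msum n p) idm -> (j < n)%nat ->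
  trace n (mmul n (p j) (lindblad_rhs n A N Ls (spectral_sum n p lamv)))
  = csum n (fun k => Cmult (Omega n N Ls p j k) (RtoC (lamv k))).
Proof.
  intros Horth Hsum Hj. unfold lindblad_rhs.
  rewrite mmul_maddr, trace_madd, trace_proj_commutator.
  - rewrite trace_proj_dissipator, Omega_mul_vec by assumption. ring.
  - now rewrite mmul_proj_spectral_sum, mmul_spectral_sum_proj.
Qed.

Theorem mainTheorem2 :
  forall (n N : nat) (Ls : nat -> Mat) (H : R -> Mat) (rho : R -> Mat)
         (lam : nat -> R -> R) (pi : nat -> R -> Mat),
    (forall t, hermitian n (H t)) ->
    (forall t, mat_has_deriv n rho t (lindblad_rhs n (H t) N Ls (rho t))) ->
    (forall j, (j < n)%nat -> derivable (lam j)) ->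
    (forall t, complete_flag n (fun j => pi j t)) ->
    (forall j t, (j < n)%nat -> mat_derivable n (pi j) t) ->
    (forall t, meq n (rho t) (msum n (fun j => mscale (RtoC (lam j t)) (pi j t)))) ->
    forall t j, (j < n)%nat ->
      let X := csum n (fun k => Cmult (Omega n N Ls (fun l => pi l t) j k)
                                      (RtoC (lam k t))) in
      derivable_pt_lim (lam j) t (Re X) /\ Im X = 0.
Proof.
  intros n N Ls H rho lam pi _ Hrho _ Hflag Hpi Hdec t j Hj X.
  assert (Hspec : forall s, meq n (rho s) (spectral_sum n (fun l => pi l s) (fun l => lam l s)))
    by exact Hdec.
  assert (Hidem : forall s, meq n (mmul n (pi j s) (pi j s)) (pi j s))
    by (intros s; exact (complete_flag_idempotent _ _ j (Hflag s) Hj)).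
  destruct (Hpi j t Hj) as [D HD].
  pose proof (C_has_deriv_trace _ _ _ _ (mat_has_deriv_mmul _ _ _ _ _ _ HD (Hrho t))) as Hder.
  replace (trace n _) with X in Hder.
  - replace (fun s => trace n _) with (fun s => RtoC (lam j s)) in Hder.
    + destruct Hder as [Hre Him]. split; [exact Hre|].
      eapply uniqueness_limite; [exact Him | apply derivable_pt_lim_const].
    + apply functional_extensionality; intros s.
      now rewrite Hspec, (trace_proj_spectral_sum n (fun l => pi l s) _ j (Hflag s) Hj).
  - pose proof (complete_flag_orthogonal _ _ (Hflag t)) as Horth.
    assert (HPr : meq n (mmul n (pi j t) (rho t)) (mscale (RtoC (lam j t)) (pi j t)))
      by (rewrite (Hspec t); exact (mmul_proj_spectral_sum n _ _ Horth j Hj)).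
    assert (HrP : meq n (mmul n (rho t) (pi j t)) (mscale (RtoC (lam j t)) (pi j t)))
      by (rewrite (Hspec t); exact (mmul_spectral_sum_proj n _ _ Horth j Hj)).
    rewrite trace_madd, (trace_deriv_proj_mul_eigen n (pi j) t D _ _ HD Hidem HPr HrP).
    rewrite (Hspec t), (trace_proj_lindblad_rhs n N Ls _ _ _ j Horth (proj2 (proj2 (Hflag t))) Hj).
    unfold X. ring.
Qed.
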